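(* Consider the $2$-peakon dynamical system on the $6$-dimensional phase space with coordinates $(a_1,a_2,b_1,b_2,q_1,q_2)$, with Hamiltonian $h=2(a_1+a_2+b_1+b_2)$ and Poisson bracket defined, for $j,k\in\{1,2\}$, by $$\{a_j,a_k\}=2a_ja_k\,\mathrm{sgn}(q_j-q_k)e^{-|q_j-q_k|},\quad \{b_j,b_k\}=\tfrac12 b_jb_k\,\mathrm{sgn}(q_j-q_k)e^{-|q_j-q_k|},$$ $$\{q_j,q_k\}=\tfrac12\mathrm{sgn}(q_j-q_k)\big(1-e^{-|q_j-q_k|}\big),\quad \{q_j,a_k\}=a_ke^{-|q_j-q_k|},\quad \{q_j,b_k\}=\tfrac12 b_ke^{-|q_j-q_k|},$$ $$\{a_j,b_k\}=a_jb_k\,\mathrm{sgn}(q_j-q_k)e^{-|q_j-q_k|}$$ (remaining brackets by antisymmetry). Then the function $J=b_1b_2\big(1-e^{-|q_1-q_2|}\big)$ is independent of $h$ and the Casimirs $\mathcal C_j=a_j/b_j^2$, and satisfies $\{J,h\}=0$; consequently this $2$-peakon system is completely integrable in the Liouville sense.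
   Context: This system describes $2$-peakon solutions $u=\sum_{j=1}^2 a_je^{-|x-q_j|}$, $v=\sum_{j=1}^2 b_je^{-|x-q_j|}$ of the Popowicz system $m_t+m_x(2u+v)+3m(2u_x+v_x)=0$, $n_t+n_x(2u+v)+2n(2u_x+v_x)=0$, $m=u-u_{xx}$, $n=v-v_{xx}$. Convention: $\mathrm{sgn}(0)=0$. The bracket is extended to functions by bilinearity, antisymmetry and the Leibniz rule; $\mathcal C_1,\mathcal C_2$ are Casimirs (Poisson-commute with every function), so the motion is on $4$-dimensional symplectic leaves. *)

From Stdlib Require Import Reals.
From Coquelicot Require Import Coquelicot.
Open Scope R_scope.

(* Phase point: p : nat -> R, only coordinates 0..5 are used:
   p 0 = a_1, p 1 = a_2, p 2 = b_1, p 3 = b_2, p 4 = q_1, p 5 = q_2. *)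
Definition pt := nat -> R.

Definition a (p : pt) (k : nat) : R := p k.
Definition b (p : pt) (k : nat) : R := p (2 + k)%nat.
Definition q (p : pt) (k : nat) : R := p (4 + k)%nat.

Definition sgn (x : R) : R :=
  if Rlt_dec 0 x then 1 else if Rlt_dec x 0 then -1 else 0.

Definition Ex (p : pt) (k l : nat) : R := exp (- Rabs (q p k - q p l)).
Definition Sg (p : pt) (k l : nat) : R := sgn (q p k - q p l).

(* Structure matrix Pi p i j = {x_i, x_j}(p) of the Poisson bracket on the
   coordinate functions, with "class" i/2 (0 = a, 1 = b, 2 = q) and
   particle index i mod 2. *)
Definition Pi (p : pt) (i j : nat) : R :=
  let k := Nat.modulo i 2 in
  let l := Nat.modulo j 2 in
  match Nat.div i 2, Nat.div j 2 with
  | 0, 0 => 2 * a p k * a p l * Sg p k l * Ex p k l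
  | 1, 1 => / 2 * b p k * b p l * Sg p k l * Ex p k l
  | 2, 2 => / 2 * Sg p k l * (1 - Ex p k l)
  | 2, 0 => a p l * Ex p k l
  | 0, 2 => - (a p k * Ex p l k)
  | 2, 1 => / 2 * b p l * Ex p k l
  | 1, 2 => - (/ 2 * b p k * Ex p l k)
  | 0, 1 => a p k * b p l * Sg p k l * Ex p k l
  | 1, 0 => - (a p l * b p k * Sg p l k * Ex p l k)
  | _, _ => 0
  end.

Definition upd (p : pt) (i : nat) (t : R) : pt :=
  fun k => if Nat.eqb k i then t else p k.

Definition pd (F : pt -> R) (i : nat) (p : pt) : R :=
  Derive (fun t => F (upd p i t)) (p i).

(* Poisson bracket of functions (bilinearity + antisymmetry + Leibniz):
   {F,G} = sum_{i,j} dF/dx_i {x_i,x_j} dG/dx_j *)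
Definition bracket (F G : pt -> R) (p : pt) : R :=
  sum_f_R0 (fun i => sum_f_R0 (fun j => pd F i p * Pi p i j * pd G j p) 5) 5.

Definition ham (p : pt) : R := 2 * (a p 0 + a p 1 + b p 0 + b p 1).
Definition Jf (p : pt) : R := b p 0 * b p 1 * (1 - exp (- Rabs (q p 0 - q p 1))).
Definition Cas1 (p : pt) : R := a p 0 / (b p 0 ^ 2).
Definition Cas2 (p : pt) : R := a p 1 / (b p 1 ^ 2).

(* Domain: Casimirs defined (b_j <> 0), J smooth (q_1 <> q_2). *)
Definition Dom (p : pt) : Prop := b p 0 <> 0 /\ b p 1 <> 0 /\ q p 0 <> q p 1.

Definition indep4 (F1 F2 F3 F4 : pt -> R) (p : pt) : Prop :=
  forall c1 c2 c3 c4 : R,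
    (forall i : nat, (i < 6)%nat ->
       c1 * pd F1 i p + c2 * pd F2 i p + c3 * pd F3 i p + c4 * pd F4 i p = 0) ->
    c1 = 0 /\ c2 = 0 /\ c3 = 0 /\ c4 = 0.

(* functional independence: differentials independent on a dense subset of
   the domain (openness is automatic by continuity of the differentials). *)
Definition func_indep4 (F1 F2 F3 F4 : pt -> R) : Prop :=
  forall p : pt, Dom p -> forall eps : R, 0 < eps ->
    exists p' : pt, Dom p' /\ (forall k : nat, (k < 6)%nat -> Rabs (p' k - p k) < eps)
      /\ indep4 F1 F2 F3 F4 p'.

Definition casimir (C : pt -> R) : Prop :=
  forall (F : pt -> R) (p : pt), Dom p -> bracket C F p = 0.

From Stdlib Require Import Reals Lra Lia.
From Coquelicot Require Import Coquelicot.
Open Scope R_scope.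

(* The Casimir property of C_k = a_k / b_k^2 comes from the proportionality of
   brackets {a_k, .} = 2 (a_k / b_k) {b_k, .}, visible row by row in the
   structure matrix; {J, h} = 0 is a direct computation.  For independence,
   only J depends on q_1 (with derivative b_1 b_2 sgn(q_1 - q_2) e^{-|q_1 - q_2|},
   nonzero on the domain), and on the coordinates a_1, a_2, b_1 the differentials
   of h, C_1, C_2 are independent exactly when 2 a_1 + b_1 <> 0; the remaining
   hypersurface is escaped by moving a_1. *)

(* Coquelicot's [auto_derive] differentiates [Rabs] through [sign]. *)
Lemma sign_sgn x : sign x = sgn x.
Proof.
  unfold sgn. destruct (Rlt_dec 0 x). now apply sign_eq_1.
  destruct (Rlt_dec x 0). now apply sign_eq_m1.
  replace x with 0 by lra. apply sign_0.
Qed.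

Lemma Sg_diag p k : Sg p k k = 0.
Proof. unfold Sg. rewrite Rminus_diag, <- sign_sgn. apply sign_0. Qed.

Lemma Sg_antisym p : Sg p 1 0 = - Sg p 0 1.
Proof. unfold Sg. rewrite <- !sign_sgn, <- sign_opp. f_equal. ring. Qed.

Lemma Ex_diag p k : Ex p k k = 1.
Proof. unfold Ex. rewrite Rminus_diag, Rabs_R0, Ropp_0. apply exp_0. Qed.

Lemma Ex_sym p : Ex p 1 0 = Ex p 0 1.
Proof. unfold Ex. now rewrite Rabs_minus_sym. Qed.

Lemma Sg_neq0 p : q p 0 <> q p 1 -> Sg p 0 1 <> 0.
Proof.
  intros Hq. unfold Sg. rewrite <- sign_sgn.
  destruct (Rlt_dec 0 (q p 0 - q p 1)) as [Hpos | Hnpos].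
  - rewrite sign_eq_1 by exact Hpos. lra.
  - rewrite sign_eq_m1 by lra. lra.
Qed.

Ltac unfold_Pi :=
  cbv beta iota zeta delta [Pi Nat.div Nat.modulo Nat.divmod fst snd Nat.sub Nat.add];
  rewrite ?Sg_diag, ?Ex_diag, ?Sg_antisym, ?Ex_sym.

Lemma Pi_a_proportional_b p k j : (k < 2)%nat -> (j < 6)%nat ->
  b p k * Pi p k j = 2 * a p k * Pi p (2 + k) j.
Proof.
  intros Hk Hj.
  destruct k as [|[|k]]; [| |lia]; destruct j as [|[|[|[|[|[|j]]]]]]; try lia;
  unfold_Pi; field.
Qed.

Lemma pd_const (F : pt -> R) i p : (forall t, F (upd p i t) = F p) -> pd F i p = 0.
Proof.
  intros HF. unfold pd. rewrite (Derive_ext _ (fun _ => F p)) by exact HF.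
  apply Derive_const.
Qed.

Ltac pd_compute :=
  unfold pd, upd, a, b, q; cbn [Nat.eqb Nat.add];
  apply is_derive_unique; auto_derive.

Lemma pd_ham p i : pd ham i p = match i with 0%nat | 1%nat | 2%nat | 3%nat => 2 | _ => 0 end.
Proof.
  destruct i as [|[|[|[|i]]]]; try (apply pd_const; reflexivity);
  unfold ham; pd_compute; auto; ring.
Qed.

Lemma pd_Jf p i : q p 0 <> q p 1 ->
  pd Jf i p = match i with
              | 2%nat => b p 1 * (1 - Ex p 0 1)
              | 3%nat => b p 0 * (1 - Ex p 0 1)
              | 4%nat => b p 0 * b p 1 * Sg p 0 1 * Ex p 0 1
              | 5%nat => - (b p 0 * b p 1 * Sg p 0 1 * Ex p 0 1)
              | _ => 0 end.
Proof.
  intros Hq. destruct i as [|[|[|[|[|[|i]]]]]]; try (apply pd_const; reflexivity);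
  unfold Jf; pd_compute; unfold Ex, Sg, a, b, q in *; cbn [Nat.add] in *.
  all: try split; rewrite ?sign_sgn; unfold Rminus; try lra; ring.
Qed.

Definition Cas (k : nat) (p : pt) : R := a p k / b p k ^ 2.

Lemma pd_Cas k i p : (k < 2)%nat -> b p k <> 0 ->
  pd (Cas k) i p =
  if Nat.eqb i k then / b p k ^ 2
  else if Nat.eqb i (2 + k) then -2 * a p k / b p k ^ 3 else 0.
Proof.
  intros Hk Hb.
  destruct k as [|[|k]]; [| |lia]; destruct i as [|[|[|[|i]]]];
  try (apply pd_const; reflexivity);
  unfold Cas; pd_compute; unfold a, b in *; cbn [Nat.add] in *;
  try split; auto; field; auto.
Qed.

Definition bracket_coord (F : pt -> R) (p : pt) (j : nat) : R :=
  sum_f_R0 (fun i => pd F i p * Pi p i j) 5.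

Lemma bracket_expand_coord F G p :
  bracket F G p = sum_f_R0 (fun j => bracket_coord F p j * pd G j p) 5.
Proof. unfold bracket, bracket_coord. cbn [sum_f_R0]. ring. Qed.

Lemma bracket_coord_Cas k p j : (k < 2)%nat -> b p k <> 0 ->
  bracket_coord (Cas k) p j = (b p k * Pi p k j - 2 * a p k * Pi p (2 + k) j) / b p k ^ 3.
Proof.
  intros Hk Hb. unfold bracket_coord. cbn [sum_f_R0].
  rewrite !(pd_Cas k _ p Hk Hb).
  destruct k as [|[|k]]; [| |lia]; cbn [Nat.eqb Nat.add]; field; exact Hb.
Qed.

Lemma casimir_Cas k : (k < 2)%nat -> casimir (Cas k).
Proof.
  intros Hk F p HD.
  assert (Hb : b p k <> 0) by (destruct k as [|[|k]]; [apply HD | apply HD | lia]).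
  rewrite bracket_expand_coord. apply sum_eq_R0. intros j Hj.
  rewrite bracket_coord_Cas, Pi_a_proportional_b by (auto; lia).
  unfold Rminus. rewrite Rplus_opp_r. field. exact Hb.
Qed.

Lemma bracket_Jf_ham p : q p 0 <> q p 1 -> bracket Jf ham p = 0.
Proof.
  intros Hq. unfold bracket. cbn [sum_f_R0].
  rewrite !(pd_Jf p _ Hq), !pd_ham. unfold_Pi. ring.
Qed.

Lemma indep4_at p : Dom p -> 2 * a p 0 + b p 0 <> 0 -> indep4 Jf ham Cas1 Cas2 p.
Proof.
  intros HD Hab c1 c2 c3 c4 H. destruct HD as (Hb0 & Hb1 & Hq).
  assert (Hsys := conj (H 0%nat ltac:(lia)) (conj (H 1%nat ltac:(lia))
                  (conj (H 2%nat ltac:(lia)) (H 4%nat ltac:(lia))))).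
  change Cas1 with (Cas 0) in Hsys. change Cas2 with (Cas 1) in Hsys.
  rewrite !(pd_Jf p _ Hq), !pd_ham, !pd_Cas in Hsys by (auto; lia).
  cbn [Nat.eqb Nat.add] in Hsys.
  rewrite ?Rmult_0_r, ?Rplus_0_l, ?Rplus_0_r in Hsys.
  destruct Hsys as (Ea1 & Ea2 & Eb1 & Eq1).
  assert (Hc1 : c1 = 0).
  { apply Rmult_integral in Eq1 as [Hc1 | Hz]; [exact Hc1 | exfalso; revert Hz].
    repeat apply Rmult_integral_contrapositive_currified; auto.
    - exact (Sg_neq0 p Hq).
    - apply Rgt_not_eq, exp_pos. }
  assert (Hc3 : c3 = -2 * c2 * b p 0 ^ 2).
  { replace c3 with (b p 0 ^ 2 * (c3 * / b p 0 ^ 2)) by (field; auto).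
    replace (c3 * / b p 0 ^ 2) with (- (c2 * 2)) by lra. ring. }
  assert (Hc2 : c2 = 0).
  { apply (Rmult_eq_reg_r (2 * a p 0 + b p 0)); [|exact Hab].
    rewrite Hc1, Hc3 in Eb1.
    replace (c2 * (2 * a p 0 + b p 0)) with
      (b p 0 / 2 * (0 * (b p 1 * (1 - Ex p 0 1)) + c2 * 2
                    + -2 * c2 * b p 0 ^ 2 * (-2 * a p 0 / b p 0 ^ 3))) by (field; auto).
    rewrite Eb1. ring. }
  assert (Hc4 : c4 = -2 * c2 * b p 1 ^ 2).
  { replace c4 with (b p 1 ^ 2 * (c4 * / b p 1 ^ 2)) by (field; auto).
    replace (c4 * / b p 1 ^ 2) with (- (c2 * 2)) by lra. ring. }
  repeat split; [exact Hc1 | exact Hc2 | rewrite Hc3, Hc2; ring | rewrite Hc4, Hc2; ring].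
Qed.

Lemma Rabs_upd_shift_lt p i d eps :
  Rabs d < eps -> forall k, Rabs (upd p i (p i + d) k - p k) < eps.
Proof.
  intros Hd k. unfold upd. destruct (Nat.eqb_spec k i) as [->|_].
  - now replace (p i + d - p i) with d by ring.
  - rewrite Rminus_diag, Rabs_R0. pose proof (Rabs_pos d). lra.
Qed.

Lemma Dom_upd_a p k t : (k < 2)%nat -> Dom p -> Dom (upd p k t).
Proof.
  intros Hk HD. destruct k as [|[|k]]; [| |lia];
  unfold Dom, upd, b, q in *; cbn [Nat.eqb Nat.add] in *; exact HD.
Qed.

Lemma func_indep4_Jf_ham_Cas12 : func_indep4 Jf ham Cas1 Cas2.
Proof.
  intros p HD eps Heps.
  destruct (Req_dec (2 * a p 0 + b p 0) 0) as [Hdeg | Hnondeg].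
  - exists (upd p 0 (p 0%nat + eps / 2)).
    split; [apply Dom_upd_a; [lia | exact HD] | split].
    + intros k _. apply Rabs_upd_shift_lt. rewrite Rabs_pos_eq; lra.
    + apply indep4_at; [apply Dom_upd_a; [lia | exact HD] |].
      unfold a, b, upd in *; cbn [Nat.eqb Nat.add] in *. lra.
  - exists p. split; [exact HD | split].
    + intros k _. rewrite Rminus_diag, Rabs_R0. exact Heps.
    + exact (indep4_at p HD Hnondeg).
Qed.

Theorem mainTheorem2 :
  func_indep4 Jf ham Cas1 Cas2 /\
  (forall p : pt, Dom p -> bracket Jf ham p = 0) /\
  casimir Cas1 /\ casimir Cas2.
Proof.
  split; [exact func_indep4_Jf_ham_Cas12 |].
  split; [intros p (_ & _ & Hq); exact (bracket_Jf_ham p Hq) |].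
  split; [exact (casimir_Cas 0 ltac:(lia)) | exact (casimir_Cas 1 ltac:(lia))].
Qed.
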